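(* Let $S$ be a semigroup with finite $\mathcal{R}$-height whose kernel (minimal two-sided ideal) is completely simple, and let $B$ be a bi-ideal of $S$. Let $n$ be the maximum length of a chain of $\mathcal{R}$-classes of $S$ each of which intersects $B$. Then $\mathrm{H}_{\mathcal{R}}(B)\leq 3n-2$.
   Context: For a semigroup $S$, $S^1$ denotes $S$ with an identity adjoined if necessary. Green's preorder: $a\leq_{\mathcal{R}} b$ iff $aS^1\subseteq bS^1$; $\mathcal{R}$ is the associated equivalence. $\mathcal{R}$-classes are ordered by $R_a\leq R_b$ iff $a\leq_{\mathcal{R}} b$, and the $\mathcal{R}$-height $\mathrm{H}_{\mathcal{R}}(S)$ is the supremum of the cardinalities of chains of $\mathcal{R}$-classes. A bi-ideal of $S$ is a non-empty subset $B$ with $BS^1B\subseteq B$; its $\mathcal{R}$-height is computed in the semigroup $B$ itself. The kernel of $S$ is its unique minimal ideal (which exists when $S$ has finite $\mathcal{R}$-height). A semigroup is completely simple if it has no proper ideals and possesses both a minimal right ideal and a minimal left ideal. *)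

From Stdlib Require Import List Sorting.Sorted.
Set Implicit Arguments.

Section Semigroup.
Variable T : Type.
Variable mul : T -> T -> T.

(* Green's R-preorder computed inside the subsemigroup U:
   a <=_R b  iff  a U^1 is contained in b U^1, i.e. a = b or a = b u with u in U. *)
Definition Rle (U : T -> Prop) (a b : T) : Prop :=
  a = b \/ exists u, U u /\ a = mul b u.

Definition Rlt (U : T -> Prop) (a b : T) : Prop :=
  Rle U a b /\ ~ Rle U b a.

Definition Req (U : T -> Prop) (a b : T) : Prop :=
  Rle U a b /\ Rle U b a.

(* A chain of R-classes of U of cardinality (length l), given by
   representatives listed in strictly decreasing R-order. *)
Definition R_chain (U : T -> Prop) (l : list T) : Prop :=
  (forall x, In x l -> U x) /\ Sorted (fun x y => Rlt U y x) l.

Definition finite_R_height (U : T -> Prop) : Prop :=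
  exists N : nat, forall l, R_chain U l -> length l <= N.

Definition R_height_le (U : T -> Prop) (m : nat) : Prop :=
  forall l, R_chain U l -> length l <= m.

Definition R_chain_meeting (B : T -> Prop) (l : list T) : Prop :=
  R_chain (fun _ => True) l /\
  (forall x, In x l -> exists b, B b /\ Req (fun _ => True) x b).

Definition subset (A C : T -> Prop) : Prop := forall x, A x -> C x.
Definition set_eq (A C : T -> Prop) : Prop := forall x, A x <-> C x.

Definition ideal_of (U J : T -> Prop) : Prop :=
  subset J U /\ (exists j, J j) /\
  (forall u j, U u -> J j -> J (mul u j) /\ J (mul j u)).

Definition right_ideal_of (U J : T -> Prop) : Prop :=
  subset J U /\ (exists j, J j) /\ (forall u j, U u -> J j -> J (mul j u)).

Definition left_ideal_of (U J : T -> Prop) : Prop :=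
  subset J U /\ (exists j, J j) /\ (forall u j, U u -> J j -> J (mul u j)).

Definition minimal_right_ideal_of (U J : T -> Prop) : Prop :=
  right_ideal_of U J /\ forall J', right_ideal_of U J' -> subset J' J -> set_eq J' J.

Definition minimal_left_ideal_of (U J : T -> Prop) : Prop :=
  left_ideal_of U J /\ forall J', left_ideal_of U J' -> subset J' J -> set_eq J' J.

Definition completely_simple (U : T -> Prop) : Prop :=
  (forall x y, U x -> U y -> U (mul x y)) /\
  (forall J, ideal_of U J -> set_eq J U) /\
  (exists J, minimal_right_ideal_of U J) /\
  (exists J, minimal_left_ideal_of U J).

Definition is_kernel (K : T -> Prop) : Prop :=
  ideal_of (fun _ => True) K /\
  forall J, ideal_of (fun _ => True) J -> subset K J.

Definition bi_ideal (B : T -> Prop) : Prop :=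
  (exists b, B b) /\
  forall b s b', B b -> B b' -> B (mul b b') /\ B (mul (mul b s) b').

End Semigroup.

(** Let x lie in the completely simple kernel K.  Then x = x s x for some s,
    and since u x lies in K for every u, also x = x (u x) y for some y.  If
    moreover x lies in B, then x = (x u) (x y s x) with x y s x in B S B, so x
    is R-below x u already inside B: in a strictly descending R-chain of B only
    the last element a can lie in K.  Three strict steps b1 > b2 > b3 > b4 in
    B give a strict step b4 < b1 in S.  Hence every third element of the part
    of a B-chain outside K, followed by a k a (k in K), is an S-chain of
    R-classes meeting B, of length at most n.  Finite R-height of S only
    serves to guarantee that the kernel exists, which is assumed outright. *)

From Stdlib Require Import List Sorting.Sorted Lia Classical.
Import ListNotations.
Set Implicit Arguments.

Section Lists.
Variable A : Type.

Fixpoint every_third (l : list A) : list A :=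
  match l with
  | x :: _ :: _ :: r => x :: every_third r
  | x :: _ => [x]
  | [] => []
  end.

Lemma list_ind3 (P : list A -> Prop) :
  P [] -> (forall x, P [x]) -> (forall x y, P [x; y]) ->
  (forall x y z r, P r -> P (x :: y :: z :: r)) -> forall l, P l.
Proof.
  intros H0 H1 H2 H3. fix IH 1.
  intros [|x [|y [|z r]]]; [apply H0 | apply H1 | apply H2 | apply H3, IH].
Qed.

Lemma length_every_third l : length l <= 3 * length (every_third l).
Proof. induction l using list_ind3; simpl in *; lia. Qed.

Lemma in_every_third l x : In x (every_third l) -> In x l.
Proof. induction l using list_ind3; simpl in *; intuition. Qed.

Variable R : A -> A -> Prop.

Lemma Sorted_every_third (R3 : A -> A -> Prop) l :
  (forall x y z w, R x y -> R y z -> R z w -> R3 x w) ->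
  Sorted R l -> Sorted R3 (every_third l).
Proof.
  intros HR3. induction l as [| | |x y z r IH] using list_ind3; intros Hs;
    try solve [repeat constructor].
  apply Sorted_inv in Hs as [Hs Hxy]. apply Sorted_inv in Hs as [Hs Hyz].
  apply Sorted_inv in Hs as [Hs Hzr]. apply Sorted_cons; [now apply IH|].
  destruct r as [|w r]; [constructor|].
  assert (R3 x w) by (apply HR3 with y z; eapply HdRel_inv; eassumption).
  destruct r as [|? [|? ?]]; now constructor.
Qed.

Lemma Sorted_app_last l c :
  Sorted R l -> (forall y, In y l -> R y c) -> Sorted R (l ++ [c]).
Proof.
  induction l as [|x l IH]; intros Hs Hc; simpl; [now repeat constructor|].
  apply Sorted_inv in Hs as [Hs Hx]. constructor.
  - apply IH; auto. intros y Hy. apply Hc. now right.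
  - destruct l as [|y l]; constructor; [apply Hc; now left|now apply HdRel_inv in Hx].
Qed.

Lemma Sorted_app_l l1 l2 : Sorted R (l1 ++ l2) -> Sorted R l1.
Proof.
  induction l1 as [|x l1 IH]; intros Hs; simpl in *; [constructor|].
  apply Sorted_inv in Hs as [Hs Hx]. constructor; [now apply IH|].
  destruct l1; constructor. now apply HdRel_inv in Hx.
Qed.

Lemma Sorted_rel_last l a :
  (forall x y z, R x y -> R y z -> R x z) ->
  Sorted R (l ++ [a]) -> forall y, In y l -> R y a.
Proof.
  intros Htrans. induction l as [|x l IH]; intros Hs y Hy; [destruct Hy|].
  apply Sorted_inv in Hs as [Hs Hx]. destruct Hy as [<-|Hy]; [|now apply IH].
  destruct l as [|z l]; apply HdRel_inv in Hx; [exact Hx|].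
  apply Htrans with z; [exact Hx|apply IH; simpl; auto].
Qed.

End Lists.

Section CompletelySimple.
Variables (T : Type) (mul : T -> T -> T).
Hypothesis assoc : forall x y z, mul x (mul y z) = mul (mul x y) z.
Variable K : T -> Prop.
Hypothesis hK : completely_simple mul K.

(* The ideal K M, for M a minimal right ideal, must be all of K; then
   minimality of M applied to {m in M | k m in a c K} gives a = k m in a c K. *)
Lemma completely_simple_mul_r a c :
  K a -> K c -> exists y, K y /\ a = mul (mul a c) y.
Proof.
  intros Ka Kc.
  destruct hK as [Kmul [Ksimple [[M [[MK [[m0 Mm0] Mmul]] Mmin]] _]]].
  set (KM := fun x => exists k m, K k /\ M m /\ x = mul k m).
  assert (HKM : ideal_of mul K KM).
  { split; [|split].
    - intros x [k [m [Kk [Mm ->]]]]. auto.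
    - exists (mul a m0), a, m0. auto.
    - intros u x Ku [k [m [Kk [Mm ->]]]]. split.
      + exists (mul u k), m. rewrite assoc. auto.
      + exists k, (mul m u). rewrite assoc. auto. }
  destruct (proj2 (Ksimple KM HKM a) Ka) as [k [m [Kk [Mm Ea]]]].
  set (J := fun x => M x /\ exists y, K y /\ mul k x = mul (mul a c) y).
  assert (HJ : right_ideal_of mul K J).
  { split; [|split].
    - intros x [Mx _]. auto.
    - exists (mul (mul m c) c). split; [auto|].
      exists c. rewrite !assoc, <- Ea. auto.
    - intros u x Ku [Mx [y [Ky Ey]]]. split; [auto|].
      exists (mul y u). rewrite assoc, Ey, assoc. auto. }
  destruct (proj2 (Mmin J HJ (fun x Jx => proj1 Jx) m) Mm) as [_ [y [Ky Ey]]].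
  exists y. rewrite Ea at 1. auto.
Qed.

End CompletelySimple.

Lemma completely_simple_flip (T : Type) (mul : T -> T -> T) (K : T -> Prop) :
  completely_simple mul K -> completely_simple (fun x y => mul y x) K.
Proof.
  intros [Kmul [Ksimple [[R HR] [L HL]]]].
  split; [|split; [|split]].
  - intros x y Kx Ky. auto.
  - intros J [JK [Jne Jmul]]. apply Ksimple.
    split; [|split]; auto.
    intros u j Ku Jj. destruct (Jmul u j Ku Jj). auto.
  - exists L. exact HL.
  - exists R. exact HR.
Qed.

Lemma completely_simple_mul_l (T : Type) (mul : T -> T -> T)
  (assoc : forall x y z, mul x (mul y z) = mul (mul x y) z)
  (K : T -> Prop) (hK : completely_simple mul K) a c :
  K a -> K c -> exists z, K z /\ a = mul z (mul c a).
Proof.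
  exact (completely_simple_mul_r (fun x y z => eq_sym (assoc z y x))
           (completely_simple_flip hK) a c).
Qed.

Lemma completely_simple_regular (T : Type) (mul : T -> T -> T)
  (assoc : forall x y z, mul x (mul y z) = mul (mul x y) z)
  (K : T -> Prop) (hK : completely_simple mul K) x :
  K x -> exists s, x = mul (mul x s) x.
Proof.
  intros Kx.
  destruct (completely_simple_mul_r assoc hK x x Kx Kx) as [y [_ Hy]].
  destruct (completely_simple_mul_l assoc hK x x Kx Kx) as [z [_ Hz]].
  exists z.
  transitivity (mul (mul x (mul z (mul x x))) y); [now rewrite <- Hz|].
  rewrite <- !assoc, (assoc x x y), <- Hy. reflexivity.
Qed.

Section Semigroup.
Variables (T : Type) (mul : T -> T -> T).
Hypothesis assoc : forall x y z, mul x (mul y z) = mul (mul x y) z.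

Local Notation S := (fun _ : T => True).

Lemma Rle_trans (U : T -> Prop) a b c :
  (forall x y, U x -> U y -> U (mul x y)) ->
  Rle mul U a b -> Rle mul U b c -> Rle mul U a c.
Proof.
  intros Umul [->|[u [Uu ->]]] [->|[v [Uv ->]]].
  - now left.
  - right. exists v. auto.
  - right. exists u. auto.
  - right. exists (mul v u). rewrite assoc. auto.
Qed.

Lemma Rlt_trans (U : T -> Prop) a b c :
  (forall x y, U x -> U y -> U (mul x y)) ->
  Rlt mul U a b -> Rlt mul U b c -> Rlt mul U a c.
Proof.
  intros Umul [Hab Hba] [Hbc Hcb]. split.
  - now apply Rle_trans with b.
  - intros Hca. apply Hcb. now apply Rle_trans with a.
Qed.

Lemma Rle_in_S (U : T -> Prop) a b : Rle mul U a b -> Rle mul S a b.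
Proof. intros [->|[u [_ ->]]]; [now left|right; now exists u]. Qed.

Lemma Rlt_factor (U : T -> Prop) a b :
  Rlt mul U a b -> exists u, U u /\ a = mul b u.
Proof. intros [[->|H] Hn]; [destruct Hn; now left|exact H]. Qed.

Lemma ideal_S_mull (J : T -> Prop) u j : ideal_of mul S J -> J j -> J (mul u j).
Proof. intros [_ [_ Jmul]] Jj. now apply (Jmul u j). Qed.

Lemma ideal_S_mulr (J : T -> Prop) u j : ideal_of mul S J -> J j -> J (mul j u).
Proof. intros [_ [_ Jmul]] Jj. now apply (Jmul u j). Qed.

Lemma ideal_Rle (J : T -> Prop) a b :
  ideal_of mul S J -> J b -> Rle mul S a b -> J a.
Proof.
  intros HJ Jb [->|[u [_ ->]]]; [exact Jb|now apply ideal_S_mulr].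
Qed.

Section BiIdeal.
Variable B : T -> Prop.
Hypothesis hB : bi_ideal mul B.

Lemma bi_ideal_mul a b : B a -> B b -> B (mul a b).
Proof. intros Ba Bb. now apply (proj2 hB a a b). Qed.

Lemma bi_ideal_mul_mul a s b : B a -> B b -> B (mul (mul a s) b).
Proof. intros Ba Bb. now apply (proj2 hB a s b). Qed.

(* If x <=_S w, then y = x u1 = w s u1 = z (u3 s u1) with u3 s u1 in B S B. *)
Lemma Rlt3_Rlt_S x y z w :
  Rlt mul B y x -> Rlt mul B z y -> Rlt mul B w z -> Rlt mul S w x.
Proof.
  intros Hyx Hzy Hwz. split.
  - apply Rle_trans with y; [auto| |apply (Rle_in_S (proj1 Hyx))].
    apply (Rle_in_S (U := B)).
    apply Rle_trans with z; [exact bi_ideal_mul|apply Hwz|apply Hzy].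
  - intros Hxw. apply (proj2 Hzy).
    destruct (Rlt_factor Hyx) as [u1 [Bu1 ->]].
    destruct (Rlt_factor Hwz) as [u3 [Bu3 ->]].
    right. destruct Hxw as [->|[s [_ ->]]].
    + exists (mul u3 u1). rewrite assoc. auto using bi_ideal_mul.
    + exists (mul (mul u3 s) u1). rewrite !assoc. auto using bi_ideal_mul_mul.
Qed.

Section Kernel.
Variable K : T -> Prop.
Hypotheses (hKS : ideal_of mul S K) (hKcs : completely_simple mul K).

Lemma kernel_Rle_mulr x u : K x -> B x -> Rle mul B x (mul x u).
Proof.
  intros Kx Bx.
  destruct (completely_simple_regular assoc hKcs _ Kx) as [s Hs].
  destruct (completely_simple_mul_r assoc hKcs x (mul u x) Kx
              (ideal_S_mull u _ hKS Kx)) as [y [_ Hy]].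
  right. exists (mul (mul x (mul y s)) x).
  split; [now apply bi_ideal_mul_mul|].
  transitivity (mul (mul (mul (mul x (mul u x)) y) s) x); [now rewrite <- Hy|].
  rewrite !assoc. reflexivity.
Qed.

Lemma Rlt_B_not_kernel a y : B y -> Rlt mul B a y -> ~ K y.
Proof.
  intros By Hay Ky. destruct (Rlt_factor Hay) as [v [_ ->]].
  apply (proj2 Hay). now apply kernel_Rle_mulr.
Qed.

Lemma kernel_Rlt_S c y : K c -> ~ K y -> Rle mul S c y -> Rlt mul S c y.
Proof.
  intros Kc nKy Hcy. split; [exact Hcy|].
  intros Hyc. apply nKy. now apply ideal_Rle with c.
Qed.

Lemma every_third_chain_meeting l c :
  R_chain mul B l -> K c -> B c ->
  (forall y, In y l -> ~ K y /\ Rle mul S c y) ->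
  R_chain_meeting mul B (every_third l ++ [c]).
Proof.
  intros [Bl Hl] Kc Bc Habove.
  assert (Bt : forall x, In x (every_third l ++ [c]) -> B x).
  { intros x Hx. apply in_app_or in Hx as [Hx|[<-|[]]]; [|exact Bc].
    now apply Bl, in_every_third. }
  split; [split; [trivial|]|].
  - apply Sorted_app_last.
    + apply (Sorted_every_third (R := fun x y => Rlt mul B y x)); [|exact Hl].
      intros x y z w Hxy Hyz Hzw. now apply Rlt3_Rlt_S with y z.
    + intros y Hy. apply in_every_third, Habove in Hy as [nKy Hcy].
      now apply kernel_Rlt_S.
  - intros x Hx. exists x. split; [now apply Bt|split; now left].
Qed.

Lemma R_chain_last_below_outside_kernel l a :
  R_chain mul B (l ++ [a]) -> forall y, In y l -> ~ K y /\ Rlt mul B a y.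
Proof.
  intros [Bl Hl] y Hy.
  assert (Hay : Rlt mul B a y).
  { refine (Sorted_rel_last _ _ _ Hl y Hy). intros x1 x2 x3 H12 H23.
    apply Rlt_trans with x2; [exact bi_ideal_mul|exact H23|exact H12]. }
  split; [|exact Hay].
  apply (Rlt_B_not_kernel (a := a)); [apply Bl, in_or_app; now left|exact Hay].
Qed.

Lemma bi_ideal_chain_compress l :
  R_chain mul B l -> l <> [] ->
  exists t, R_chain_meeting mul B t /\ length l <= 3 * length t - 2.
Proof.
  intros Hl Hne.
  induction l as [|a l _] using rev_ind; [contradiction|]. clear Hne.
  pose proof (R_chain_last_below_outside_kernel _ _ Hl) as Habove.
  destruct Hl as [Bl Hl].
  assert (Ba : B a) by (apply Bl, in_or_app; right; now left).
  destruct (proj1 (proj2 hKS)) as [k Kk].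
  set (c := mul (mul a k) a).
  assert (Kc : K c) by (now apply ideal_S_mulr, ideal_S_mull).
  assert (Bc : B c) by (now apply bi_ideal_mul_mul).
  assert (Hca : Rle mul S c a).
  { right. exists (mul k a). split; [trivial|]. unfold c. now rewrite assoc. }
  assert (Hcl : forall y, In y l -> ~ K y /\ Rle mul S c y).
  { intros y Hy. destruct (Habove y Hy) as [nKy Hay]. split; [exact nKy|].
    apply Rle_trans with a; [trivial|exact Hca|exact (Rle_in_S (proj1 Hay))]. }
  rewrite length_app. simpl.
  destruct (classic (K a)) as [Ka|nKa].
  - exists (every_third l ++ [c]). split.
    + apply every_third_chain_meeting; [|assumption..].
      split; [intros y Hy; apply Bl, in_or_app; now left|].
      exact (Sorted_app_l _ _ Hl).
    + pose proof (length_every_third l). rewrite length_app. simpl. lia.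
  - exists (every_third (l ++ [a]) ++ [c]). split.
    + apply every_third_chain_meeting; [split; assumption|assumption..|].
      intros y Hy. apply in_app_or in Hy as [Hy|[<-|[]]]; [now apply Hcl|].
      split; [exact nKa|exact Hca].
    + pose proof (length_every_third (l ++ [a])).
      rewrite !length_app in *. simpl in *. lia.
Qed.

End Kernel.
End BiIdeal.
End Semigroup.

Theorem theorem3p3 (T : Type) (mul : T -> T -> T)
  (assoc : forall x y z, mul x (mul y z) = mul (mul x y) z)
  (hfin : finite_R_height mul (fun _ => True))
  (K : T -> Prop) (hK : is_kernel mul K) (hKcs : completely_simple mul K)
  (B : T -> Prop) (hB : bi_ideal mul B)
  (n : nat)
  (hn_ex : exists l, R_chain_meeting mul B l /\ length l = n)
  (hn_max : forall l, R_chain_meeting mul B l -> length l <= n) :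
  R_height_le mul B (3 * n - 2).
Proof.
  intros l Hl.
  destruct l as [|x l]; [simpl; lia|].
  destruct (bi_ideal_chain_compress assoc hB (proj1 hK) hKcs Hl)
    as [t [Ht Hlen]]; [discriminate|].
  specialize (hn_max t Ht). lia.
Qed.
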